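(* Let $(X_n)_{n\ge0}$ be a time-homogeneous Markov chain on $(S,\mathcal S)$ with $m$-step transition probabilities $\mathsf P_x(m,\cdot)$, fix $m\ge1$, and let $V^{(m)}$ be the operator on bounded measurable functions $h$ on $S^2=S\times S$ defined by $$V^{(m)}h(x^1,x^2):=\big(1-\alpha^{(m)}(x^1,x^2)\big)\int_{S^2}h(y)\,K^{(m)}\big((x^1,x^2),dy\big),$$ with operator norm $\|V^{(m)}\|$ taken with respect to the supremum norm. Then for all $x^1,x^2\in S$ and all $n\ge0$, $$\tfrac12\,\|\mu^{x^1}_{nm}-\mu^{x^2}_{nm}\|_{TV}\le\|V^{(m)}\|^n,$$ where $\mu^x_k=\mathsf P_x(k,\cdot)$.
   Context: $S$ is a non-empty topological space with Borel $\sigma$-algebra $\mathcal S$. For $x^1,x^2\in S$, $\alpha^{(m)}(x^1,x^2):=\int\big(\frac{\mathsf P_{x^2}(m,dy)}{\mathsf P_{x^1}(m,dy)}\wedge1\big)\mathsf P_{x^1}(m,dy)$ (ratio = density of the absolutely continuous part), i.e. the total mass of $\mathsf P_{x^1}(m,\cdot)\wedge\mathsf P_{x^2}(m,\cdot)$; note $\alpha^{(m)}(x,x)=1$. $K^{(m)}$ is the $m$-step Markov coupling kernel on $S^2$: from $(x^1,x^2)$ with $x^1\ne x^2$ and $\alpha:=\alpha^{(m)}(x^1,x^2)\in(0,1)$, with probability $\alpha$ both coordinates move to a common point with law $(\mathsf P_{x^1}(m,\cdot)\wedge\mathsf P_{x^2}(m,\cdot))/\alpha$, and with probability $1-\alpha$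 they move independently with laws $(\mathsf P_{x^i}(m,\cdot)-\mathsf P_{x^1}(m,\cdot)\wedge\mathsf P_{x^2}(m,\cdot))/(1-\alpha)$, $i=1,2$ (in the degenerate cases $\alpha\in\{0,1\}$ the corresponding branch is omitted); from a diagonal point $(x,x)$ both coordinates move together with law $\mathsf P_x(m,\cdot)$. $\|\mu-\nu\|_{TV}:=\sup_{A\in\mathcal S}|\mu(A)-\nu(A)|$. *)

From HB Require Import structures.
From mathcomp Require Import all_boot all_order all_algebra.
From mathcomp Require Import all_classical all_reals all_analysis measurable_realfun.
Set Implicit Arguments. Unset Strict Implicit. Unset Printing Implicit Defensive.
Import Order.TTheory GRing.Theory Num.Theory.
Import numFieldNormedType.Exports.
Local Open Scope classical_set_scope.
Local Open Scope ring_scope.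

Notation Borel T := (g_sigma_algebraType (@open T)).

Section coupling.
Context d (S : measurableType d) (R : realType).
Local Open Scope ereal_scope.

(* lambda = mu1 + mu2, a finite measure dominating mu1 and mu2 *)
Section lam.
Variables (mu1 mu2 : probability S R).
Definition lam : set S -> \bar R := measure_add mu1 mu2.
HB.instance Definition _ := Measure.on lam.
Let lam_fin : fin_num_fun lam.
Proof.
move=> A mA; rewrite /lam measure_addE fin_numD.
by rewrite !fin_num_measure.
Qed.
HB.instance Definition _ := @Measure_isFinite.Build _ S R lam lam_fin.
End lam.

Definition dens1 (mu1 mu2 : probability S R) : S -> \bar R :=
  Radon_Nikodym (charge_of_finite_measure mu1) (lam mu1 mu2).
Definition dens2 (mu1 mu2 : probability S R) : S -> \bar R :=
  Radon_Nikodym (charge_of_finite_measure mu2) (lam mu1 mu2).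

(* density of mu1 /\ mu2 w.r.t. lambda *)
Definition mindens (mu1 mu2 : probability S R) (y : S) : \bar R :=
  mine (dens1 mu1 mu2 y) (dens2 mu1 mu2 y).

Definition overlap (mu1 mu2 : probability S R) : \bar R :=
  \int[lam mu1 mu2]_y mindens mu1 mu2 y.

Definition alpha (P : nat -> S -> probability S R) (m : nat) (x1 x2 : S) :=
  overlap (P m x1) (P m x2).

(* Integral of h against the coupling law of (mu1, mu2) for x1 <> x2:
   with prob. alpha both coordinates equal, law (mu1/\mu2)/alpha;
   with prob. 1-alpha independent with laws (mu_i - mu1/\mu2)/(1-alpha).
   (In the degenerate cases alpha in {0,1} the corresponding term vanishes:
   the mass of mu1/\mu2 is 0, resp. 1/(1-alpha) is 0 by MathComp convention
   and the remaining measures are 0.) *)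
Definition coupling_int (mu1 mu2 : probability S R) (h : S * S -> R) : \bar R :=
  let la := lam mu1 mu2 in
  let g := mindens mu1 mu2 in
  let f1 := dens1 mu1 mu2 in
  let f2 := dens2 mu1 mu2 in
  let a := overlap mu1 mu2 in
  (\int[la]_y ((h (y, y))%:E * g y)) +
  ((fine (1 - a))^-1)%:E *
    \int[la]_y1 \int[la]_y2 ((h (y1, y2))%:E * (f1 y1 - g y1) * (f2 y2 - g y2)).

(* \int h(y) K^(m)((x1,x2), dy) *)
Definition Kint (P : nat -> S -> probability S R) (m : nat) (h : S * S -> R)
  (z : S * S) : \bar R :=
  if pselect (z.1 = z.2) then \int[P m z.1]_y (h (y, y))%:E
  else coupling_int (P m z.1) (P m z.2) h.

Definition Vop (P : nat -> S -> probability S R) (m : nat) (h : S * S -> R)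
  (z : S * S) : \bar R :=
  (1 - alpha P m z.1 z.2) * Kint P m h z.

Definition Vnorm (P : nat -> S -> probability S R) (m : nat) : \bar R :=
  ereal_sup [set e | exists (h : S * S -> R) (z : S * S),
    [/\ measurable_fun [set: S * S] h, (forall w, `|h w| <= 1)%R &
        e = `|Vop P m h z| ] ].

Definition tv (mu nu : probability S R) : \bar R :=
  ereal_sup [set `|mu A - nu A| | A in [set A : set S | measurable A]].

End coupling.

From HB Require Import structures.
From mathcomp Require Import all_boot all_order all_algebra.
From mathcomp Require Import all_classical all_reals all_analysis measurable_realfun.
From mathcomp Require Import lra.
Set Implicit Arguments. Unset Strict Implicit. Unset Printing Implicit Defensive.
Import Order.TTheory GRing.Theory Num.Theory.
Import numFieldNormedType.Exports.
Local Open Scope classical_set_scope.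
Local Open Scope ring_scope.

(* Testing V^(m) on h = 1 shows that ||V^(m)|| dominates 1 - alpha^(m)(x, y)
   for all x, y, because K^(m) is a probability kernel.  Writing P_x(m, .) and
   P_y(m, .) through their densities p, q against their sum and splitting
   p = min(p, q) + (p - min(p, q)), a function with values in [c, c + s] has
   integrals against the two laws differing by at most s (1 - alpha^(m)(x, y)).
   By Chapman-Kolmogorov the oscillation of x |-> P_x(nm, A) is therefore at
   most ||V^(m)||^n, which bounds the total variation distance even without
   the factor 1/2. *)

Lemma bounded_normr_le (T : Type) (R : realType) (f : T -> R) (M : R) :
  (forall x, `|f x| <= M) -> [bounded f x | x in setT].
Proof.
move=> fM; exists M; split; first by rewrite num_real.
by move=> N /ltW MN y _ /=; exact: le_trans (fM y) MN.
Qed.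

Lemma fine_probability_itv d (S : measurableType d) (R : realType)
    (mu : probability S R) (A : set S) :
  measurable A -> 0 <= fine (mu A) <= 1.
Proof.
move=> mA; rewrite -!lee_fin fineK ?fin_num_measure //.
by rewrite measure_ge0 probability_le1.
Qed.

Lemma dist_fine_probability_le1 d (S : measurableType d) (R : realType)
    (mu nu : probability S R) (A : set S) :
  measurable A -> `|fine (mu A) - fine (nu A)| <= 1.
Proof.
move=> mA; rewrite ler_norml.
have /andP[? ?] := fine_probability_itv mu mA.
have /andP[? ?] := fine_probability_itv nu mA.
by apply/andP; split; lra.
Qed.

Lemma tv_le d (S : measurableType d) (R : realType)
    (mu nu : probability S R) (B : R) :
  (forall A, measurable A -> `|fine (mu A) - fine (nu A)| <= B) ->
  (tv mu nu <= B%:E)%E.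
Proof.
move=> muB; apply: ge_ereal_sup => _ [A mA <-].
rewrite -(fineK (fin_num_measure mu A mA)) -(fineK (fin_num_measure nu A mA)).
by rewrite -EFinB lee_fin; exact: muB.
Qed.

Lemma tv_le1 d (S : measurableType d) (R : realType) (mu nu : probability S R) :
  (tv mu nu <= 1%:E)%E.
Proof. by apply: tv_le => A; exact: dist_fine_probability_le1. Qed.

Lemma inf_range_osc_bounds (T : Type) (R : realType) (f : T -> R) (s : R) :
  (forall z z', `|f z - f z'| <= s) ->
  forall z, inf (range f) <= f z <= inf (range f) + s.
Proof.
move=> osc z; have lb : has_lbound (range f).
  by exists (f z - s) => _ [z' _ <-]; move: (osc z z'); rewrite ler_norml => /andP[]; lra.
apply/andP; split; first by apply: (ge_inf lb); exists z.
rewrite -lerBlDr; apply: lb_le_inf; first by exists (f z), z.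
by move=> _ [z' _ <-]; move: (osc z z'); rewrite ler_norml => /andP[]; lra.
Qed.

Lemma expe_ge1 (R : realDomainType) (e : \bar R) n : (1 <= e)%E -> (1 <= e ^+ n)%E.
Proof.
move=> e1; elim: n => [|n IH]; first by rewrite expe0.
by rewrite expeS -[1%E]mule1 lee_pmul.
Qed.

Section density.
Context d (S : measurableType d) (R : realType).

Definition densR (mu : probability S R) (la : {finite_measure set S -> \bar R})
    (y : S) : R :=
  fine (Radon_Nikodym (charge_of_finite_measure mu) la y).

Variables (mu : probability S R) (la : {finite_measure set S -> \bar R}).
Hypothesis mu_la : mu `<< la.

Lemma Radon_Nikodym_densR y :
  Radon_Nikodym (charge_of_finite_measure mu) la y = (densR mu la y)%:E.
Proof. by rewrite fineK // Radon_Nikodym_fin_num. Qed.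

Lemma integrable_densR : la.-integrable setT (EFin \o densR mu la).
Proof.
apply: (eq_integrable _ (Radon_Nikodym (charge_of_finite_measure mu) la)) => //.
  by move=> y _; rewrite Radon_Nikodym_densR.
exact: Radon_Nikodym_integrable.
Qed.

Lemma measurable_densR : measurable_fun setT (densR mu la).
Proof. exact/measurable_EFinP/(measurable_int _ integrable_densR). Qed.

Lemma integral_densR : (\int[la]_y (densR mu la y)%:E = 1)%E.
Proof.
have := @Radon_Nikodym_integral _ _ _ (charge_of_finite_measure mu) la _
  mu_la measurableT.
rewrite /= probability_setT => ->.
by apply: eq_integral => y _; rewrite Radon_Nikodym_densR.
Qed.

Lemma Rintegral_densR_change (f : S -> R) : measurable_fun setT f ->
  [bounded f y | y in setT] ->
  \int[mu]_y f y = \int[la]_y (f y * densR mu la y).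
Proof.
move=> mf bf; have mu_fin : (mu setT < +oo)%E.
  exact: le_lt_trans (probability_le1 mu measurableT) (ltry 1).
have := Radon_Nikodym_change_of_variables mu_la measurableT
  (measurable_bounded_integrable measurableT mu_fin mf bf).
rewrite /Rintegral => <-; congr fine; apply: eq_integral => y _.
by rewrite /= Radon_Nikodym_densR.
Qed.

End density.

Section pair.
Context d (S : measurableType d) (R : realType).
Variables mu nu : probability S R.
Local Notation la := (lam mu nu).

Lemma lam_dominates_l : mu `<< la.
Proof.
move=> N N0 A mA AN; have := N0 A mA AN.
by rewrite /lam measure_addE => /eqP; rewrite padde_eq0 // => /andP[/eqP].
Qed.

Lemma lam_dominates_r : nu `<< la.
Proof.
move=> N N0 A mA AN; have := N0 A mA AN.
by rewrite /lam measure_addE => /eqP; rewrite padde_eq0 // => /andP[_ /eqP].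
Qed.

Definition mindensR (y : S) : R := Num.min (densR mu la y) (densR nu la y).

Lemma dens1E y : dens1 mu nu y = (densR mu la y)%:E.
Proof. exact: (Radon_Nikodym_densR lam_dominates_l y). Qed.

Lemma dens2E y : dens2 mu nu y = (densR nu la y)%:E.
Proof. exact: (Radon_Nikodym_densR lam_dominates_r y). Qed.

Lemma mindensE y : mindens mu nu y = (mindensR y)%:E.
Proof. by rewrite /mindens dens1E dens2E EFin_min. Qed.

Lemma mindensR_le_l y : mindensR y <= densR mu la y.
Proof. by rewrite ge_min lexx. Qed.

Lemma mindensR_le_r y : mindensR y <= densR nu la y.
Proof. by rewrite ge_min lexx orbT. Qed.

Lemma measurable_mindensR : measurable_fun setT mindensR.
Proof.
by apply: measurable_minr; apply: measurable_densR;
  [exact: lam_dominates_l | exact: lam_dominates_r].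
Qed.

Lemma integrable_mindensR : la.-integrable setT (EFin \o mindensR).
Proof.
pose dsum y := `|densR mu la y| + `|densR nu la y|.
have idsum : la.-integrable setT (EFin \o dsum).
  apply: (eq_integrable _ ((EFin \o (Num.norm \o densR mu la)) \+
                          (EFin \o (Num.norm \o densR nu la)))) => //.
  by apply: integrableD => //; apply: integrable_norm;
    apply: integrable_densR; [exact: lam_dominates_l | exact: lam_dominates_r].
apply: le_integrable idsum => //; first exact/measurable_EFinP/measurable_mindensR.
move=> y _ /=; rewrite lee_fin [X in _ <= X]ger0_norm ?addr_ge0 //.
by rewrite /mindensR /dsum /Num.min; case: ifP => _; rewrite ?lerDl ?lerDr.
Qed.

Definition overlapR : R := \int[la]_y mindensR y.

Lemma integral_mindensR : (\int[la]_y (mindensR y)%:E = overlapR%:E)%E.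
Proof.
by rewrite /overlapR /Rintegral fineK // (integrable_fin_num _ integrable_mindensR).
Qed.

Lemma overlapE : overlap mu nu = overlapR%:E.
Proof.
by rewrite /overlap -integral_mindensR; apply: eq_integral => y _; rewrite mindensE.
Qed.

Section excess.
Variable mu' : probability S R.
Hypotheses (mu'_la : mu' `<< la) (mindensR_le : forall y, mindensR y <= densR mu' la y).
Local Notation excess y := (densR mu' la y - mindensR y).

Lemma integrable_excess : la.-integrable setT (EFin \o (fun y => excess y)).
Proof.
apply: (eq_integrable _ (fun y => (densR mu' la y)%:E - (mindensR y)%:E)%E) => //.
by apply: integrableB => //; [exact: integrable_densR | exact: integrable_mindensR].
Qed.

Lemma Rintegral_excess : \int[la]_y excess y = 1 - overlapR.
Proof.
rewrite RintegralB //; last exact: integrable_mindensR; last exact: integrable_densR.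
by rewrite /Rintegral integral_densR.
Qed.

Lemma integral_excess : (\int[la]_y (excess y)%:E = (1 - overlapR)%:E)%E.
Proof.
by rewrite -Rintegral_excess /Rintegral fineK // (integrable_fin_num _ integrable_excess).
Qed.

Section bounded_integrand.
Variables (f : S -> R) (c s : R).
Hypotheses (mf : measurable_fun setT f) (f_bnd : forall y, c <= f y <= c + s).

Let f_bounded : [bounded f y | y in setT].
Proof.
apply: (@bounded_normr_le _ _ _ (`|c| + `|c + s|)) => y.
have /andP[cf fcs] := f_bnd y; rewrite ler_norml.
have := ler_norm (c + s); have := ler_norm (- c); rewrite normrN.
have := normr_ge0 c; have := normr_ge0 (c + s).
by move=> *; apply/andP; split; lra.
Qed.

Let integrable_fM k : la.-integrable setT (EFin \o k) ->
  la.-integrable setT (EFin \o (fun y => f y * k y)).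
Proof.
move=> ik; apply: (eq_integrable _ ((EFin \o f) \* (EFin \o k))%E) => //.
exact: integrableMr.
Qed.

Lemma Rintegral_excess_bounds :
  c * (1 - overlapR) <= \int[la]_y (f y * excess y) <= (c + s) * (1 - overlapR).
Proof.
have iexc := integrable_excess.
have exc_ge0 y : 0 <= excess y by rewrite subr_ge0.
have iZexc b : la.-integrable setT (EFin \o (fun y => b * excess y)).
  apply: (eq_integrable _ (fun y => b%:E * (excess y)%:E)%E) => //.
  exact: integrableZl.
rewrite -Rintegral_excess -!RintegralZl //; apply/andP; split.
- apply: le_Rintegral => //; first exact: integrable_fM.
  by move=> y _; apply: ler_wpM2r => //; case/andP: (f_bnd y).
- apply: le_Rintegral => //; first exact: integrable_fM.
  by move=> y _; apply: ler_wpM2r => //; case/andP: (f_bnd y).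
Qed.

Lemma Rintegral_split_excess :
  \int[mu']_y f y = \int[la]_y (f y * excess y) + \int[la]_y (f y * mindensR y).
Proof.
rewrite (Rintegral_densR_change mu'_la mf f_bounded) -RintegralD //.
- by apply: eq_Rintegral => y _; rewrite -mulrDr subrK.
- exact/integrable_fM/integrable_excess.
- exact/integrable_fM/integrable_mindensR.
Qed.

End bounded_integrand.
End excess.

Lemma Rintegral_diff_le_overlap (f : S -> R) (c s : R) :
  measurable_fun setT f -> (forall y, c <= f y <= c + s) ->
  `|\int[mu]_y f y - \int[nu]_y f y| <= s * (1 - overlapR).
Proof.
move=> mf f_bnd.
have /andP[lo1 hi1] := Rintegral_excess_bounds lam_dominates_l mindensR_le_l mf f_bnd.
have /andP[lo2 hi2] := Rintegral_excess_bounds lam_dominates_r mindensR_le_r mf f_bnd.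
rewrite (Rintegral_split_excess lam_dominates_l mf f_bnd).
rewrite (Rintegral_split_excess lam_dominates_r mf f_bnd).
rewrite ler_norml; move: lo1 hi1 lo2 hi2; rewrite mulrDl.
by set u := c * _; set v := s * _; move=> *; apply/andP; split; lra.
Qed.

Lemma coupling_int1 : coupling_int mu nu (fun=> 1) = 1%:E.
Proof.
rewrite /coupling_int overlapE.
have -> : (\int[la]_y (1%:E * mindens mu nu y) = overlapR%:E)%E.
  by rewrite -integral_mindensR; apply: eq_integral => y _; rewrite mul1e mindensE.
have -> : (\int[la]_y1 \int[la]_y2 (1%:E * (dens1 mu nu y1 - mindens mu nu y1) *
    (dens2 mu nu y2 - mindens mu nu y2)) = ((1 - overlapR) * (1 - overlapR))%:E)%E.
  transitivity (\int[la]_y1 ((densR mu la y1 - mindensR y1)%:E * (1 - overlapR)%:E))%E.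
    apply: eq_integral => y1 _.
    rewrite -(integral_excess lam_dominates_r) -integralZl //; last first.
      exact: (integrable_excess lam_dominates_r).
    by apply: eq_integral => y2 _; rewrite mul1e dens1E dens2E !mindensE.
  rewrite integralZr //; last exact: (integrable_excess lam_dominates_l).
  by rewrite (integral_excess lam_dominates_l) -EFinM.
rewrite -EFinB /= -EFinM -EFinD; congr EFin.
(* If alpha = 1, the independent branch has mass 0 and 0^-1 = 0 is harmless. *)
have [a1|a_neq1] := eqVneq (1 - overlapR) 0; first by rewrite a1 invr0 mul0r addr0; lra.
by rewrite mulrA mulVf // mul1r addrC subrK.
Qed.
End pair.

Section operator_norm.
Context d (S : measurableType d) (R : realType).
Variables (P : nat -> S -> probability S R) (m : nat).

Lemma Kint1 z : Kint P m (fun=> 1) z = 1%:E.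
Proof.
rewrite /Kint; case: pselect => z12; last exact: coupling_int1.
by rewrite integral_cst //= mul1e probability_setT.
Qed.

Lemma abse_Vop_le_Vnorm (h : S * S -> R) (z : S * S) :
  measurable_fun setT h -> (forall w, `|h w| <= 1) ->
  (`|Vop P m h z| <= Vnorm P m)%E.
Proof. by move=> mh h1; apply: ereal_sup_ubound; exists h, z. Qed.

Lemma Vnorm_ge0 (z : S * S) : (0 <= Vnorm P m)%E.
Proof.
apply: le_trans (abse_ge0 _) (abse_Vop_le_Vnorm (h := fun=> 0) z _ _) => //.
by move=> w; rewrite normr0.
Qed.

Lemma one_sub_overlap_le_Vnorm x y :
  ((1 - overlapR (P m x) (P m y))%:E <= Vnorm P m)%E.
Proof.
apply: le_trans (abse_Vop_le_Vnorm (h := fun=> 1) (x, y) _ _) => //; last first.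
  by move=> w; rewrite normr1.
by rewrite /Vop Kint1 mule1 /alpha overlapE -EFinB /= lee_abs.
Qed.

End operator_norm.

Section chain.
Context d (S : measurableType d) (R : realType).
Variable P : nat -> S -> probability S R.
Hypotheses (P_meas : forall k A, measurable A ->
               measurable_fun [set: S] (fun x => P k x A : \bar R))
           (P_CK : forall k l x A, measurable A ->
               P (k + l)%N x A = (\int[P k x]_y P l y A)%E).
Variable m : nat.

Lemma transition_osc_le r : Vnorm P m = r%:E ->
  forall n x y A, measurable A ->
  `|fine (P (n * m)%N x A) - fine (P (n * m)%N y A)| <= r ^+ n.
Proof.
move=> Vr; elim=> [|n IH] x y A mA; first by rewrite expr0 dist_fine_probability_le1.
pose F z := fine (P (n * m)%N z A).
have intF x' : (\int[P m x']_z P (n * m)%N z A = \int[P m x']_z (F z)%:E)%E.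
  by apply: eq_integral => z _; rewrite /F fineK // fin_num_measure.
rewrite mulSn !P_CK // !intF.
change (`|\int[P m x]_z F z - \int[P m y]_z F z| <= r ^+ n.+1).
have mF : measurable_fun setT F.
  exact: measurableT_comp (fine_measurable measurableT) (P_meas _ mA).
have F_bnd := inf_range_osc_bounds (fun z z' => IH z z' A mA).
apply: le_trans (Rintegral_diff_le_overlap _ _ mF F_bnd) _.
have r_ge0 : 0 <= r by have := Vnorm_ge0 P m (x, x); rewrite Vr lee_fin.
rewrite exprSr ler_wpM2l ?exprn_ge0 //.
by have := one_sub_overlap_le_Vnorm P m x y; rewrite Vr lee_fin.
Qed.

Lemma tv_transition_le_Vnorm_expn n x y :
  (tv (P (n * m)%N x) (P (n * m)%N y) <= Vnorm P m ^+ n)%E.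
Proof.
have := Vnorm_ge0 P m (x, x); case Vr: (Vnorm P m) => [r| |] // _.
  by rewrite -EFin_expe; apply: tv_le => A mA; exact: transition_osc_le.
exact: le_trans (tv_le1 _ _) (expe_ge1 _ (leey 1)).
Qed.

End chain.

Theorem corollary1 (R : realType) (T : ptopologicalType)
  (P : nat -> Borel T -> probability (Borel T) R)
  (P_meas : forall k (A : set (Borel T)), measurable A ->
     measurable_fun [set: Borel T] (fun x => P k x A : \bar R))
  (P_0 : forall x (A : set (Borel T)), measurable A -> P 0%N x A = \d_x A)
  (P_CK : forall k l x (A : set (Borel T)), measurable A ->
     P (k + l)%N x A = (\int[P k x]_y P l y A)%E)
  (m : nat) (m_gt0 : (0 < m)%N) (x1 x2 : Borel T) (n : nat) :
  ((2^-1)%:E * tv (P (n * m)%N x1) (P (n * m)%N x2) <= Vnorm P m ^+ n)%E.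
Proof.
have tvV := tv_transition_le_Vnorm_expn P_meas P_CK m n x1 x2.
apply: le_trans (lee_wpmul2l _ tvV) _; first by rewrite lee_fin invr_ge0.
apply: gee_pMl => //; first exact/expe_ge0/(Vnorm_ge0 P m (x1, x1)).
by rewrite lee_fin; lra.
Qed.
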